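(* Let $S_X,S_Y$ be finite nonempty action sets, $\varphi:S_X\times S_Y\to\mathbb{R}$, and $\lambda\in[0,1)$. Suppose that $\sigma_X:\mathcal{H}\to\Delta(S_X)$ is a $(\varphi,\lambda)$-autocratic behavioral strategy for player $X$ (of arbitrary memory). Then there exists a two-point reactive learning strategy for $X$ that is also $(\varphi,\lambda)$-autocratic.
   Context: Two players $X,Y$ play a repeated game with finite action sets $S_X,S_Y$; $\Delta(S)$ denotes the probability distributions on $S$. $\varphi$ is extended to mixed actions in its first argument by $\varphi(\tau_X,s_Y)=\mathbb{E}_{s_X\sim\tau_X}[\varphi(s_X,s_Y)]$. Histories: $\mathcal{H}=\bigcup_{T\ge0}(S_X\times S_Y)^T$ (including the empty history). A behavioral strategy for $X$ is a map $\sigma_X:\mathcal{H}\to\Delta(S_X)$, and similarly for $Y$. In each round $t=0,1,2,\dots$ the players independently draw $s_X^t\sim\sigma_X[h^t]$ and $s_Y^t\sim\sigma_Y[h^t]$, where $h^t$ is the history of realized action pairs in rounds $0,\dots,t-1$; $\mathbb{E}_{\sigma_X,\sigma_Y}$ denotes expectation over the resulting random play. For $\lambda\in[0,1)$, $\sigma_X$ is $(\varphi,\lambda)$-autocratic if for every behavioral strategy $\sigma_Y$ of $Y$, $\mathbb{E}_{\sigma_X,\sigma_Y}\big[(1-\lambda)\sum_{t\ge0}\lambda^t\varphi(s_X^t,s_Y^t)\big]=0$. A reactive learning strategy for $X$ is a pair $(\sigma_X^0,\sigma_X^* )$ with $\sigma_X^0\in\Delta(S_X)$ and $\sigma_X^*:\Delta(S_X)\times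 S_Y\to\Delta(S_X)$; it is played by using the mixed action $\tau_X^0=\sigma_X^0$ in round $0$ and $\tau_X^{t+1}=\sigma_X^*[\tau_X^t,s_Y^t]$ in round $t+1$, where $s_Y^t$ is $Y$'s realized action in round $t$. It is a two-point reactive learning strategy if there exist $\tau_X^+,\tau_X^-\in\Delta(S_X)$, $p_0\in[0,1]$ and $p^*:[0,1]\times S_Y\to[0,1]$ such that $\sigma_X^0=p_0\tau_X^++(1-p_0)\tau_X^-$ and $\sigma_X^*[p\tau_X^++(1-p)\tau_X^-,s_Y]=p^*[p,s_Y]\tau_X^++(1-p^*[p,s_Y])\tau_X^-$ for all $p\in[0,1]$, $s_Y\in S_Y$ (so every mixed action played is a mixture of $\tau_X^+$ and $\tau_X^-$). *)

From HB Require Import structures.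
From mathcomp Require Import all_boot all_order all_algebra.
From mathcomp Require Import classical_sets reals topology normedtype sequences.
Set Implicit Arguments. Unset Strict Implicit. Unset Printing Implicit Defensive.
Import Order.TTheory GRing.Theory Num.Theory.
Import numFieldNormedType.Exports.
Local Open Scope classical_set_scope.
Local Open Scope ring_scope.

Section Game.
Variable R : realType.

Record dist (T : finType) := Dist {
  pmf :> {ffun T -> R};
  pmf_ge0 : forall t, 0 <= pmf t;
  pmf_sum1 : \sum_t pmf t = 1 }.

Variables SX SY : finType.

(* histories: finite sequences of realized action pairs (oldest first) *)
Definition history := seq (SX * SY).

Definition stratX := history -> dist SX.
Definition stratY := history -> dist SY.

Fixpoint prob_from (sX : stratX) (sY : stratY) (past fut : history) : R :=
  match fut with
  | [::] => 1
  | ab :: f => sX past ab.1 * sY past ab.2 * prob_from sX sY (rcons past ab) f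
  end.

Definition prob_hist sX sY (h : history) : R := prob_from sX sY [::] h.

Definition stage_payoff (phi : SX -> SY -> R) (sX : stratX) (sY : stratY)
  (h : history) : R :=
  \sum_a \sum_b sX h a * sY h b * phi a b.

Definition expected_stage phi sX sY (t : nat) : R :=
  \sum_(h : t.-tuple (SX * SY)) prob_hist sX sY h * stage_payoff phi sX sY h.

Definition disc_partial phi (lambda : R) sX sY (n : nat) : R :=
  (1 - lambda) * \sum_(t < n) lambda ^+ t * expected_stage phi sX sY t.

Definition autocratic phi (lambda : R) (sX : stratX) : Prop :=
  forall sY : stratY, disc_partial phi lambda sX sY @ \oo --> (0 : R).

(* reactive learning strategy (sigma0, sigma_star) played as a behavioral strategy:
   tau^0 = sigma0, tau^{t+1} = sigma_star[tau^t, s_Y^t] *)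
Definition reactive_strategy (s0 : dist SX) (ss : dist SX -> SY -> dist SX)
  : stratX :=
  fun h => foldl (fun tau ab => ss tau ab.2) s0 h.

Definition mixf (p : R) (a b : {ffun SX -> R}) : {ffun SX -> R} :=
  [ffun s => p * a s + (1 - p) * b s].

Definition two_point (s0 : dist SX) (ss : dist SX -> SY -> dist SX) : Prop :=
  exists (tp tm : dist SX) (p0 : R) (ps : R -> SY -> R),
    [/\ 0 <= p0 <= 1,
        (forall p sy, 0 <= p <= 1 -> 0 <= ps p sy <= 1),
        pmf s0 = mixf p0 tp tm &
        (forall (tau : dist SX) p sy, 0 <= p <= 1 ->
            pmf tau = mixf p tp tm -> pmf (ss tau sy) = mixf (ps p sy) tp tm)].

End Game.

From HB Require Import structures.
From mathcomp Require Import all_boot all_order all_algebra.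
From mathcomp Require Import boolp classical_sets reals topology normedtype sequences function_spaces.
From mathcomp Require Import ring lra.
Import Order.TTheory GRing.Theory Num.Theory.
Import numFieldNormedType.Exports.
Local Open Scope classical_set_scope.
Local Open Scope ring_scope.

(* Because X's strategy is autocratic, X's continuation value V(h) at a history h that Y
   can reach with positive probability does not depend on Y's strategy: changing Y's play
   after h changes the (zero) total payoff by P(h) lam^|h| times the change of V(h).
   Hence, for every action y of Y, V satisfies the Bellman identity
     V(h) = (1 - lam) phi(sigma_X(h), y) + lam sum_a sigma_X(h)(a) V(h, (a, y)).
   Let M and m be the supremum and infimum of V, so that m <= V([]) = 0 <= M.  Taking
   histories whose value approaches M (resp. m) and using compactness of Delta(S_X), one
   gets mixed actions tau+ and tau- such that from level M (resp. m) every reply y leads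
   to a continuation level in [m, M].  The two-point strategy keeps a level
   w = m + p (M - m), plays p tau+ + (1 - p) tau-, and after y moves to the level w' with
   w = (1 - lam) phi(p tau+ + (1 - p) tau-, y) + lam w', which again lies in [m, M].
   This bounded level is a potential vanishing at the empty history, so the discounted
   payoff telescopes to 0.  When lam = 0 or m = M, some mixed action is neutral against
   every y and X simply repeats it. *)

Lemma cvg_fsum (R : realType) (T : Type) (F : set_system T) (I : finType)
    (u : I -> T -> R) (l : I -> R) : Filter F ->
  (forall i, u i x @[x --> F] --> l i) -> \sum_i u i x @[x --> F] --> \sum_i l i.
Proof.
move=> F_filter u_cvg.
apply: (@cvg_big R I +%R 0 xpredT _ T F (index_enum I) u l) => [|i _].
- exact: add_continuous.
- exact: u_cvg.
Qed.

Section SimplexCompactness.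
Variable R : realType.
Variables I J : finType.
Variables (f : J -> I -> R) (L U : J -> R).
Local Notation T := (prod_topology (fun _ : I => R)).

Lemma coord_continuous i : continuous (fun x : T => x i).
Proof. exact: (@proj_continuous I (fun _ => R) i). Qed.

Lemma sum_coord_continuous (g : I -> R -> R) :
  (forall i, continuous (g i)) -> continuous (fun x : T => \sum_i g i (x i)).
Proof.
move=> g_cont x.
apply: (@cvg_fsum R T (nbhs x) I (fun i (y : T) => g i (y i)) (fun i => g i (x i))) => i.
exact: continuous_comp (coord_continuous i x) (g_cont i (x i)).
Qed.

Definition relaxed_solutions (e : R) : set T :=
  \bigcap_(i in [set: I]) [set x : T | 0 <= x i] `&` [set x : T | \sum_i x i = 1] `&`
  \bigcap_(j in [set: J])
    ([set x : T | L j - e <= \sum_i x i * f j i] `&` [set x : T | \sum_i x i * f j i <= U j + e]).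

Lemma relaxed_solutions_closed e : closed (relaxed_solutions e).
Proof.
have closed_sub (g : T -> R) (A : set R) : continuous g -> closed A -> closed (g @^-1` A).
  by move=> gc Ac; apply: preimage_closed => // x _; exact: gc.
apply: closedI; first apply: closedI.
- apply: closed_bigI => i _.
  apply: (closed_sub (fun x : T => x i) [set r | 0 <= r]); last exact: closed_ge.
  exact: coord_continuous.
- apply: (closed_sub (fun x : T => \sum_i x i) [set r | r = 1]); last exact: closed_eq.
  exact: (sum_coord_continuous (fun=> id) (fun _ _ => cvg_id)).
- apply: closed_bigI => j _.
  have lin_cont : continuous (fun x : T => \sum_i x i * f j i).
    by apply: (sum_coord_continuous (fun i r => r * f j i)) => i; exact: mulrr_continuous.
  apply: closedI.
  - by apply: (closed_sub _ [set r | L j - e <= r] lin_cont); exact: closed_ge.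
  - by apply: (closed_sub _ [set r | r <= U j + e] lin_cont); exact: closed_le.
Qed.

Lemma dist_of_simplex (x : I -> R) :
  (forall i, 0 <= x i) -> \sum_i x i = 1 -> {tau : dist R I | forall i, tau i = x i}.
Proof.
move=> x_ge0 x_sum1.
have ge0 i : 0 <= [ffun i => x i] i by rewrite ffunE.
have sum1 : \sum_i [ffun i => x i] i = 1 by under eq_bigr do rewrite ffunE.
by exists (Dist ge0 sum1) => i; rewrite ffunE.
Qed.

(* The relaxed solution sets form a filter base of closed subsets of the compact cube
   [0, 1]^I, so they have a common cluster point. *)
Lemma simplex_feasible_of_approx :
  (forall e, 0 < e ->
     exists tau : dist R I, forall j, L j - e <= \sum_i tau i * f j i <= U j + e) ->
  exists tau : dist R I, forall j, L j <= \sum_i tau i * f j i <= U j.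
Proof.
move=> approx.
pose F := filter_from [set e : R | 0 < e] relaxed_solutions.
have F_filter : ProperFilter F.
  apply: filter_from_proper; last first.
    move=> e /approx[tau tauP]; exists (fun i => tau i); split; first split.
    - by move=> i _; exact: pmf_ge0.
    - exact: pmf_sum1.
    - by move=> j _; have /andP[] := tauP j.
  apply: filter_from_filter; first by exists 1; rewrite /= ltr01.
  move=> e1 e2 /= e1_gt0 e2_gt0; exists (Num.min e1 e2); first by rewrite /= lt_min e1_gt0.
  have relaxed_mono e e' : e <= e' -> relaxed_solutions e `<=` relaxed_solutions e'.
    move=> ee' x [xS xL]; split=> // j _; have [xLj xUj] := xL j Logic.I; split.
    - by apply: le_trans xLj; rewrite lerD2l lerN2.
    - by apply: le_trans xUj _; rewrite lerD2l.
  by move=> x xe; split; apply: relaxed_mono xe; rewrite ge_min lexx ?orbT.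
have F_cube : F [set x : T | forall i, `[0, 1]%classic (x i)].
  exists 1; first by rewrite /= ltr01.
  move=> x [[x_ge0 x_sum1] _] i; rewrite /= in_itv /= x_ge0 //=.
  by rewrite -x_sum1 (bigD1 i) //= lerDl sumr_ge0 // => k _; exact: x_ge0.
have [x [_ x_cluster]] := tychonoff (fun _ => @segment_compact R 0 1) F_filter F_cube.
have x_relaxed e : 0 < e -> relaxed_solutions e x.
  move=> e_gt0; apply: relaxed_solutions_closed.
  by rewrite clusterE in x_cluster; apply: x_cluster; exists e.
have [[x_ge0 x_sum1] _] := x_relaxed 1 ltr01.
have [tau tauE] := dist_of_simplex x (fun i => x_ge0 i Logic.I) x_sum1.
exists tau => j; under eq_bigr do rewrite tauE.
apply/andP; split; apply/ler_addgt0Pr => e e_gt0.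
all: have [_ /(_ j Logic.I)[xL xU]] := x_relaxed e e_gt0.
- by rewrite -lerBlDr.
- exact: xU.
Qed.
End SimplexCompactness.

Set Implicit Arguments. Unset Strict Implicit. Unset Printing Implicit Defensive.

Lemma sum_tupleS (V : nmodType) (T : finType) n (G : n.+1.-tuple T -> V) :
  \sum_(t : n.+1.-tuple T) G t = \sum_(x : T) \sum_(t : n.-tuple T) G (cons_tuple x t).
Proof.
rewrite pair_big /= (reindex (fun p : T * n.-tuple T => cons_tuple p.1 p.2)) //=.
exists (fun t : n.+1.-tuple T => (thead t, behead_tuple t)).
  by move=> [x t] _ /=; congr pair; apply: val_inj.
by move=> t _; apply: val_inj; case: t => -[|x s].
Qed.

Section ExpectationFrom.
Variable R : realType.
Variables SX SY : finType.
Local Notation history := (history SX SY).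
Implicit Types (sx : stratX R SX SY) (sy : stratY R SX SY) (g : history) (F : history -> R).

Definition expect_from sx sy g n F :=
  \sum_(f : n.-tuple (SX * SY)) prob_from sx sy g f * F (g ++ f).

Lemma expect_from0 sx sy g F : expect_from sx sy g 0 F = F g.
Proof.
rewrite /expect_from (big_pred1 [tuple]) /= ?cats0 ?mul1r // => t.
by symmetry; apply/eqP; exact: tuple0.
Qed.

Lemma expect_fromS sx sy g n F : expect_from sx sy g n.+1 F =
  \sum_a \sum_b sx g a * sy g b * expect_from sx sy (rcons g (a, b)) n F.
Proof.
rewrite /expect_from sum_tupleS [RHS]pair_big /=; apply: eq_bigr => -[a b] _ /=.
by rewrite mulr_sumr; apply: eq_bigr => t _; rewrite cat_rcons !mulrA.
Qed.

Lemma prob_from_ge0 sx sy g f : 0 <= prob_from sx sy g f.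
Proof.
elim: f g => [|ab f IH] g /=; first exact: ler01.
by rewrite !mulr_ge0 // pmf_ge0.
Qed.

Lemma expect_from_le sx sy g n F1 F2 :
  (forall h, F1 h <= F2 h) -> expect_from sx sy g n F1 <= expect_from sx sy g n F2.
Proof. by move=> le12; apply: ler_sum => t _; rewrite ler_wpM2l // prob_from_ge0. Qed.

Lemma sum_pmf2_cst (tau : dist R SX) (sig : dist R SY) k :
  \sum_a \sum_b tau a * sig b * k = k.
Proof.
rewrite -[RHS]mul1r -(pmf_sum1 tau) mulr_suml; apply: eq_bigr => a _.
by rewrite -mulr_suml -mulr_sumr pmf_sum1 mulr1.
Qed.

Lemma expect_from_cst sx sy g n k : expect_from sx sy g n (fun=> k) = k.
Proof.
elim: n g => [|n IH] g; first by rewrite expect_from0.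
rewrite expect_fromS -[RHS](sum_pmf2_cst (sx g) (sy g)).
by apply: eq_bigr => a _; apply: eq_bigr => b _; rewrite IH.
Qed.

Lemma norm_expect_from_le sx sy g n F B :
  (forall h, `|F h| <= B) -> `|expect_from sx sy g n F| <= B.
Proof.
move=> FB; have FB' h : - B <= F h <= B by rewrite -ler_norml.
rewrite ler_norml; apply/andP; split.
- rewrite -(expect_from_cst sx sy g n (- B)); apply: expect_from_le => h.
  by case/andP: (FB' h).
- rewrite -[X in _ <= X](expect_from_cst sx sy g n B); apply: expect_from_le => h.
  by case/andP: (FB' h).
Qed.

Lemma prob_from_agree sx sy sy' g f :
  (forall i, (i < size f)%N -> sy (g ++ take i f) = sy' (g ++ take i f)) ->
  prob_from sx sy g f = prob_from sx sy' g f.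
Proof.
elim: f g => [|ab f IH] g agree //=.
have := agree 0%N erefl; rewrite take0 cats0 => ->.
by congr (_ * _); apply: IH => i lt_i; have := agree i.+1 lt_i; rewrite /= cat_rcons.
Qed.

Lemma prob_from_rcons sx sy g f ab :
  prob_from sx sy g (rcons f ab) = prob_from sx sy g f * sx (g ++ f) ab.1 * sy (g ++ f) ab.2.
Proof.
elim: f g => [|x f IH] g /=; first by rewrite cats0 mulr1 mul1r.
by rewrite IH cat_rcons !mulrA.
Qed.

Lemma expect_from_ext sx sy sy' g n F F' :
  (forall k, sy (g ++ k) = sy' (g ++ k)) -> (forall k, F (g ++ k) = F' (g ++ k)) ->
  expect_from sx sy g n F = expect_from sx sy' g n F'.
Proof.
move=> sy_ext F_ext; apply: eq_bigr => f _; rewrite F_ext.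
by congr (_ * _); apply: prob_from_agree => i _; exact: sy_ext.
Qed.

End ExpectationFrom.

Lemma cvg_geometric_bounded (R : realType) (lam B : R) (u : nat -> R) :
  0 <= lam < 1 -> (forall n, `|u n| <= B) -> (fun n => lam ^+ n * u n) @ \oo --> (0 : R).
Proof.
move=> /andP[lam_ge0 lam_lt1] uB.
have geo : B * lam ^+ n @[n --> \oo] --> (0 : R).
  by rewrite -(mulr0 B); apply: cvgM; [exact: cvg_cst | apply: cvg_expr; rewrite ger0_norm].
have geoN : - (B * lam ^+ n) @[n --> \oo] --> (0 : R) by rewrite -oppr0; apply: cvgN.
apply: (squeeze_cvgr _ geoN geo).
apply: nearW => n; have lamn_ge0 : 0 <= lam ^+ n by rewrite exprn_ge0.
have /andP[uL uU] : - B <= u n <= B by rewrite -ler_norml.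
by rewrite mulrC -mulrN ler_wpM2l //= ler_wpM2l.
Qed.

Section Potential.
Variable R : realType.
Variables SX SY : finType.
Variable phi : SX -> SY -> R.
Local Notation history := (history SX SY).
Implicit Types (sx : stratX R SX SY) (sy : stratY R SX SY) (g : history).

Definition mixed_payoff (tau : {ffun SX -> R}) y := \sum_a tau a * phi a y.

Lemma stage_payoffE sx sy g :
  stage_payoff phi sx sy g = \sum_b sy g b * mixed_payoff (sx g) b.
Proof.
rewrite /stage_payoff exchange_big; apply: eq_bigr => b _.
by rewrite /mixed_payoff mulr_sumr; apply: eq_bigr => a _; rewrite mulrCA mulrA.
Qed.

Lemma mixed_payoff_mixf p (tau1 tau2 : {ffun SX -> R}) y :
  mixed_payoff (mixf p tau1 tau2) y = p * mixed_payoff tau1 y + (1 - p) * mixed_payoff tau2 y.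
Proof.
rewrite /mixed_payoff !mulr_sumr -big_split; apply: eq_bigr => a _.
by rewrite ffunE mulrDl !mulrA.
Qed.

Variable lam : R.

Definition potential sx (W : history -> R) := forall g y,
  (1 - lam) * mixed_payoff (sx g) y = W g - lam * \sum_a sx g a * W (rcons g (a, y)).

Lemma stage_payoff_potential sx W sy g : potential sx W ->
  (1 - lam) * stage_payoff phi sx sy g =
    W g - lam * \sum_a \sum_b sx g a * sy g b * W (rcons g (a, b)).
Proof.
move=> W_pot; rewrite stage_payoffE mulr_sumr.
have -> : \sum_a \sum_b sx g a * sy g b * W (rcons g (a, b)) =
          \sum_b sy g b * \sum_a sx g a * W (rcons g (a, b)).
  rewrite exchange_big; apply: eq_bigr => b _.
  by rewrite mulr_sumr; apply: eq_bigr => a _; rewrite mulrCA mulrA.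
have W_avg : W g = \sum_b sy g b * W g by rewrite -mulr_suml pmf_sum1 mul1r.
rewrite [in RHS]W_avg mulr_sumr -sumrB.
by apply: eq_bigr => b _; rewrite mulrCA W_pot mulrBr mulrCA.
Qed.

Lemma expect_from_potential sx sy W : potential sx W -> forall n g,
  (1 - lam) * expect_from sx sy g n (stage_payoff phi sx sy) =
    expect_from sx sy g n W - lam * expect_from sx sy g n.+1 W.
Proof.
move=> W_pot; elim=> [|n IH] g.
  rewrite !expect_from0 (stage_payoff_potential _ _ W_pot) expect_fromS.
  by under [in RHS]eq_bigr do under eq_bigr do rewrite expect_from0.
rewrite !(expect_fromS _ _ g) !mulr_sumr -sumrB; apply: eq_bigr => a _.
rewrite !mulr_sumr -sumrB; apply: eq_bigr => b _.
by rewrite mulrCA IH mulrBr mulrCA.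
Qed.

Lemma disc_partial_potential sx sy W : potential sx W -> forall n,
  disc_partial phi lam sx sy n = W [::] - lam ^+ n * expect_from sx sy [::] n W.
Proof.
move=> W_pot n; rewrite /disc_partial mulr_sumr.
under eq_bigr => t _.
  rewrite mulrCA [_ * expected_stage _ _ _ _](expect_from_potential _ W_pot).
  rewrite mulrBr mulrA -exprSr -opprB.
  over.
rewrite sumrN -(big_mkord xpredT (fun t => lam ^+ t.+1 * expect_from sx sy [::] t.+1 W -
                                          lam ^+ t * expect_from sx sy [::] t W)).
by rewrite telescope_sumr // expr0 mul1r expect_from0 opprB.
Qed.

Lemma autocratic_of_potential sx W B : 0 <= lam < 1 ->
  potential sx W -> W [::] = 0 -> (forall g, `|W g| <= B) -> autocratic phi lam sx.
Proof.
move=> lam01 W_pot W_nil WB sy.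
rewrite (funext (disc_partial_potential sy W_pot)) W_nil.
under eq_fun do rewrite sub0r.
rewrite -oppr0; apply: cvgN; apply: cvg_geometric_bounded lam01 _ => n.
exact: norm_expect_from_le.
Qed.

End Potential.

Section MixDist.
Variable R : realType.
Variable T : finType.

Lemma pmf_le1 (tau : dist R T) t : tau t <= 1.
Proof. by rewrite -(pmf_sum1 tau) (bigD1 t) //= lerDl sumr_ge0 // => *; exact: pmf_ge0. Qed.

Definition clamp01 (p : R) := Num.max 0 (Num.min p 1).

Lemma clamp01_in p : 0 <= clamp01 p <= 1.
Proof. by rewrite /clamp01 le_max lexx ge_max ler01 ge_min lexx orbT. Qed.

Lemma clamp01_id p : 0 <= p <= 1 -> clamp01 p = p.
Proof. by case/andP=> p_ge0 p_le1; rewrite /clamp01 (min_l p_le1) (max_r p_ge0). Qed.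

Lemma mixf_ge0 p (tau1 tau2 : dist R T) t : 0 <= p <= 1 -> 0 <= mixf p tau1 tau2 t.
Proof.
by case/andP=> p_ge0 p_le1; rewrite ffunE addr_ge0 // mulr_ge0 ?pmf_ge0 ?subr_ge0.
Qed.

Lemma mixf_sum1 p (tau1 tau2 : dist R T) : \sum_t mixf p tau1 tau2 t = 1.
Proof.
under eq_bigr do rewrite ffunE.
by rewrite big_split /= -!mulr_sumr !pmf_sum1 !mulr1 addrC subrK.
Qed.

(* The weight is clamped to [0, 1] so that [mix_dist] is total in [p]. *)
Definition mix_dist (tau1 tau2 : dist R T) (p : R) : dist R T :=
  Dist (fun t => mixf_ge0 tau1 tau2 t (clamp01_in p)) (mixf_sum1 (clamp01 p) tau1 tau2).

End MixDist.

Section Dirac.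
Variable R : realType.
Variable T : finType.

Lemma dirac_ge0 (y : T) t : 0 <= [ffun b => ((b == y)%:R : R)] t.
Proof. by rewrite ffunE ler0n. Qed.

Lemma dirac_sum1 (y : T) : \sum_t [ffun b => ((b == y)%:R : R)] t = 1.
Proof.
rewrite (bigD1 y) //= ffunE eqxx big1 ?addr0 // => b /negbTE b_neq_y.
by rewrite ffunE b_neq_y.
Qed.

Definition dirac_dist (y : T) : dist R T := Dist (dirac_ge0 y) (dirac_sum1 y).

Lemma dirac_distE y b : dirac_dist y b = (b == y)%:R.
Proof. by rewrite ffunE. Qed.

Lemma sum_dirac_dist y (G : T -> R) : \sum_b dirac_dist y b * G b = G y.
Proof.
rewrite (bigD1 y) //= dirac_distE eqxx mul1r big1 ?addr0 // => b /negbTE b_neq_y.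
by rewrite dirac_distE b_neq_y mul0r.
Qed.

End Dirac.

Lemma convex_between (R : realDomainType) (p u v lo hi : R) : 0 <= p <= 1 ->
  lo <= u <= hi -> lo <= v <= hi -> lo <= p * u + (1 - p) * v <= hi.
Proof.
move=> /andP[p_ge0 p_le1] /andP[lo_u u_hi] /andP[lo_v v_hi].
have q_ge0 : 0 <= 1 - p by rewrite subr_ge0.
have mix_self x : p * x + (1 - p) * x = x by rewrite -mulrDl addrC subrK mul1r.
by rewrite -[X in X <= _ <= _]mix_self -[X in _ <= _ <= X]mix_self !lerD ?ler_wpM2l.
Qed.

Section TwoPointStrategy.
Variable R : realType.
Variables SX SY : finType.
Variable phi : SX -> SY -> R.
Variable lam : R.
Hypotheses (lam_gt0 : 0 < lam) (lam_lt1 : lam < 1).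
Variables (m M : R) (tp tm : dist R SX).
Hypotheses (m_lt_M : m < M) (m_le0 : m <= 0) (M_ge0 : 0 <= M).
(* From level [M] (resp. [m]), [tp] (resp. [tm]) leads to a continuation level in [m, M]. *)
Hypothesis tp_bounds : forall y, lam * m <= M - (1 - lam) * mixed_payoff phi tp y <= lam * M.
Hypothesis tm_bounds : forall y, lam * m <= m - (1 - lam) * mixed_payoff phi tm y <= lam * M.

Lemma M_sub_m_gt0 : 0 < M - m. Proof. by rewrite subr_gt0. Qed.

Lemma two_point_ends_differ (y : SY) : exists a, tp a != tm a.
Proof.
case: (pickP (fun a => tp a != tm a)) => [a tp_tm_a | tp_eq_tm]; first by exists a.
have same_payoff : mixed_payoff phi tp y = mixed_payoff phi tm y.
  by apply: eq_bigr => a _; move/negbFE/eqP: (tp_eq_tm a) => ->.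
have /andP[_ tp_up] := tp_bounds y; have /andP[tm_lo _] := tm_bounds y.
rewrite same_payoff in tp_up.
have : (1 - lam) * M <= (1 - lam) * m by lra.
by rewrite ler_pM2l ?subr_gt0 // leNgt m_lt_M.
Qed.

Variable a0 : SX.
Hypothesis tp_tm_a0 : tp a0 != tm a0.

Definition level (p : R) := m + p * (M - m).
Definition weight_of_level (w : R) := (w - m) / (M - m).
Definition mix_weight (tau : dist R SX) := (tau a0 - tm a0) / (tp a0 - tm a0).
(* The level [w'] reached after [y] solves [level p = (1 - lam) * payoff + lam * w']. *)
Definition next_weight (p : R) (y : SY) :=
  weight_of_level ((level p - (1 - lam) * mixed_payoff phi (mixf p tp tm) y) / lam).

Definition two_point_init := mix_dist tp tm (weight_of_level 0).
Definition two_point_update (tau : dist R SX) (y : SY) :=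
  mix_dist tp tm (next_weight (mix_weight tau) y).
Local Notation strategy := (reactive_strategy two_point_init two_point_update).

Lemma level_weight_of_level w : level (weight_of_level w) = w.
Proof.
rewrite /level /weight_of_level divfK; first by rewrite addrC subrK.
exact: lt0r_neq0 M_sub_m_gt0.
Qed.

Lemma weight_of_level_in w : m <= w <= M -> 0 <= weight_of_level w <= 1.
Proof.
case/andP=> m_w w_M; have Mm_gt0 := M_sub_m_gt0; apply/andP; split.
- by rewrite divr_ge0 // subr_ge0 // ltW.
- by rewrite ler_pdivrMr // mul1r lerD2r.
Qed.

Lemma mix_weight_mixf tau p : pmf tau = mixf p tp tm -> mix_weight tau = p.
Proof.
move=> tauE; rewrite /mix_weight tauE ffunE.
have tp_tm_neq0 : tp a0 - tm a0 != 0 by rewrite subr_eq0.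
by apply: (mulIf tp_tm_neq0); rewrite divfK //; ring.
Qed.

Lemma next_weight_in p y : 0 <= p <= 1 -> 0 <= next_weight p y <= 1.
Proof.
move=> p01; apply: weight_of_level_in.
have cont_eq : level p - (1 - lam) * mixed_payoff phi (mixf p tp tm) y =
    p * (M - (1 - lam) * mixed_payoff phi tp y) + (1 - p) * (m - (1 - lam) * mixed_payoff phi tm y).
  by rewrite mixed_payoff_mixf /level; ring.
have := convex_between p01 (tp_bounds y) (tm_bounds y); rewrite -cont_eq.
by rewrite !ler_pdivlMr ?ler_pdivrMr // ![_ * lam]mulrC.
Qed.

Lemma two_point_strategy_mixf h :
  exists2 p, 0 <= p <= 1 & pmf (strategy h) = mixf p tp tm.
Proof.
case/lastP: h => [|h ab]; first by exists (clamp01 (weight_of_level 0)); rewrite ?clamp01_in.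
rewrite /reactive_strategy foldl_rcons.
by exists (clamp01 (next_weight (mix_weight (strategy h)) ab.2)); rewrite ?clamp01_in.
Qed.

Definition two_point_level (h : history SX SY) := level (mix_weight (strategy h)).

Lemma two_point_level_bounded h : `|two_point_level h| <= M - m.
Proof.
have [p /andP[p_ge0 p_le1] pE] := two_point_strategy_mixf h.
rewrite /two_point_level (mix_weight_mixf pE) /level ler_norml.
have Mm_gt0 := M_sub_m_gt0.
have x_le : p * (M - m) <= M - m by rewrite ler_piMl // ltW.
have x_ge0 : 0 <= p * (M - m) by rewrite mulr_ge0 // ltW.
by move: m_le0 M_ge0 => ? ?; apply/andP; split; lra.
Qed.

Lemma two_point_level_nil : two_point_level [::] = 0.
Proof.
rewrite /two_point_level (@mix_weight_mixf _ (weight_of_level 0)) ?level_weight_of_level //=.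
by rewrite clamp01_id // weight_of_level_in // m_le0.
Qed.

Lemma two_point_potential : potential phi lam strategy two_point_level.
Proof.
move=> h y; have [p p01 pE] := two_point_strategy_mixf h.
have next_level a : two_point_level (rcons h (a, y)) = level (next_weight p y).
  rewrite /two_point_level /reactive_strategy foldl_rcons -/(strategy h) /=.
  rewrite (@mix_weight_mixf _ (next_weight p y)) //= (mix_weight_mixf pE).
  by rewrite clamp01_id // next_weight_in.
under eq_bigr do rewrite next_level.
rewrite -mulr_suml pmf_sum1 mul1r /two_point_level (mix_weight_mixf pE) pE.
rewrite /next_weight level_weight_of_level [lam * _]mulrC divfK ?lt0r_neq0 //.
by rewrite opprB subrKC.
Qed.

Lemma two_point_autocratic : autocratic phi lam strategy.
Proof.
apply: autocratic_of_potential two_point_potential two_point_level_nil two_point_level_bounded.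
by rewrite ltW.
Qed.

Lemma two_point_init_update : two_point two_point_init two_point_update.
Proof.
exists tp, tm, (clamp01 (weight_of_level 0)), (fun p y => clamp01 (next_weight p y)).
split=> //; first exact: clamp01_in.
- by move=> *; exact: clamp01_in.
- by move=> tau p y _ tauE; rewrite /= (mix_weight_mixf tauE).
Qed.

End TwoPointStrategy.

Section ConstantStrategy.
Variable R : realType.
Variables SX SY : finType.
Variable phi : SX -> SY -> R.
Variable tau : dist R SX.

Lemma const_strategy_two_point : two_point tau (fun _ (_ : SY) => tau).
Proof.
have tauE : pmf tau = mixf 0 tau tau.
  by apply/ffunP => a; rewrite ffunE mul0r subr0 mul1r add0r.
by exists tau, tau, 0, (fun _ _ => 0); split; rewrite ?lexx ?ler01.
Qed.

Lemma const_strategy_autocratic lam : 0 <= lam < 1 -> (forall y, mixed_payoff phi tau y = 0) ->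
  autocratic phi lam (reactive_strategy tau (fun _ (_ : SY) => tau)).
Proof.
move=> lam01 tau_neutral.
have const h : reactive_strategy tau (fun _ (_ : SY) => tau) h = tau.
  by case/lastP: h => // h ab; rewrite /reactive_strategy foldl_rcons.
apply: (autocratic_of_potential (W := fun=> 0) (B := 0)) => // [h y|]; last by rewrite normr0.
by rewrite const tau_neutral big1 => [|a _]; rewrite ?mulr0 ?subr0.
Qed.

End ConstantStrategy.

Lemma not_prefix_shorter (T : eqType) (s t : seq T) : (size t < size s)%N -> ~~ prefix s t.
Proof. by apply: contraTN => /size_prefix; rewrite -leqNgt. Qed.

Lemma mean_between (R : realType) (T : finType) (tau : dist R T) (G : T -> R) lo hi :
  (forall t, tau t != 0 -> lo <= G t <= hi) -> lo <= \sum_t tau t * G t <= hi.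
Proof.
move=> G_between; have mean_cst c : \sum_t tau t * c = c by rewrite -mulr_suml pmf_sum1 mul1r.
rewrite -[X in X <= _ <= _]mean_cst -[X in _ <= _ <= X]mean_cst.
apply/andP; split; apply: ler_sum => t _.
all: have [->|tau_t] := eqVneq (tau t) 0; rewrite ?mul0r // ler_wpM2l ?pmf_ge0 //.
all: by case/andP: (G_between t tau_t).
Qed.

Section ContinuationValue.
Variable R : realType.
Variables SX SY : finType.
Variable phi : SX -> SY -> R.
Variable lam : R.
Hypotheses (lam_ge0 : 0 <= lam) (lam_lt1 : lam < 1).
Variable sX : stratX R SX SY.
Local Notation history := (history SX SY).
Implicit Types (sy : stratY R SX SY) (g h : history).

Definition disc_from sy g N :=
  (1 - lam) * \sum_(t < N) lam ^+ t * expect_from sX sy g t (stage_payoff phi sX sy).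

Definition payoff_bound := \sum_a \sum_b `|phi a b|.

Lemma payoff_bound_ge0 : 0 <= payoff_bound.
Proof. by apply: sumr_ge0 => a _; apply: sumr_ge0. Qed.

Lemma norm_stage_payoff_le sy h : `|stage_payoff phi sX sy h| <= payoff_bound.
Proof.
apply: le_trans (ler_norm_sum _ _ _) _; apply: ler_sum => a _.
apply: le_trans (ler_norm_sum _ _ _) _; apply: ler_sum => b _.
rewrite !normrM -[X in _ <= X]mul1r ler_wpM2r // !ger0_norm ?pmf_ge0 //.
by rewrite -[1]mul1r ler_pM ?pmf_ge0 ?pmf_le1.
Qed.

Lemma norm_disc_from_le sy g N : `|disc_from sy g N| <= payoff_bound.
Proof.
have lam1_ge0 : 0 <= 1 - lam by rewrite subr_ge0 ltW.
have geo_sum : (1 - lam) * \sum_(t < N) lam ^+ t = 1 - lam ^+ N.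
  by rewrite -opprB mulNr -subrX1 opprB.
apply: le_trans (_ : (1 - lam) * \sum_(t < N) lam ^+ t * payoff_bound <= _).
  rewrite normrM ger0_norm // ler_wpM2l //.
  apply: le_trans (ler_norm_sum _ _ _) _; apply: ler_sum => t _.
  rewrite normrM ger0_norm ?exprn_ge0 // ler_wpM2l ?exprn_ge0 //.
  exact/norm_expect_from_le/norm_stage_payoff_le.
by rewrite -mulr_suml mulrA geo_sum ler_piMl ?payoff_bound_ge0 ?gerBl ?exprn_ge0.
Qed.

Lemma disc_fromS sy g N : disc_from sy g N.+1 = (1 - lam) * stage_payoff phi sX sy g +
  lam * \sum_a \sum_b sX g a * sy g b * disc_from sy (rcons g (a, b)) N.
Proof.
rewrite /disc_from big_ord_recl /= expr0 mul1r expect_from0 mulrDr; congr (_ + _).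
transitivity (\sum_(t < N) \sum_a \sum_b (1 - lam) * lam ^+ t.+1 * (sX g a * sy g b) *
                 expect_from sX sy (rcons g (a, b)) t (stage_payoff phi sX sy)).
  rewrite mulr_sumr; apply: eq_bigr => t _.
  rewrite /bump leq0n add1n expect_fromS !mulr_sumr; apply: eq_bigr => a _.
  by rewrite !mulr_sumr; apply: eq_bigr => b _; ring.
rewrite exchange_big mulr_sumr; apply: eq_bigr => a _.
rewrite exchange_big mulr_sumr; apply: eq_bigr => b _.
by rewrite !mulr_sumr; apply: eq_bigr => t _; rewrite exprS; ring.
Qed.

Lemma disc_from_cvg sy g : cvgn (disc_from sy g).
Proof.
have -> : disc_from sy g =
    series (fun t => (1 - lam) * (lam ^+ t * expect_from sX sy g t (stage_payoff phi sX sy))).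
  by apply: funext => N; rewrite seriesEord /= /disc_from mulr_sumr.
apply: normed_cvg; apply: (@series_le_cvg _ _ (geometric payoff_bound lam)).
- by move=> n; exact: normr_ge0.
- by move=> n; apply: geometric_ge0 => //; exact: payoff_bound_ge0.
- move=> n; rewrite /geometric /= !normrM.
  have lam1_ge0 : 0 <= 1 - lam by rewrite subr_ge0 ltW.
  rewrite ger0_norm // ger0_norm ?exprn_ge0 // mulrA [payoff_bound * _]mulrC.
  apply: ler_pM; rewrite ?mulr_ge0 ?exprn_ge0 //.
  + by rewrite ler_piMl ?exprn_ge0 // gerBl.
  + exact/norm_expect_from_le/norm_stage_payoff_le.
- by apply: is_cvg_geometric_series; rewrite ger0_norm.
Qed.

Definition cont_value sy g := lim (disc_from sy g @ \oo).

Lemma disc_from_cont_value sy g : disc_from sy g @ \oo --> cont_value sy g.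
Proof. exact: disc_from_cvg. Qed.

Lemma cont_value_rec sy g : cont_value sy g = (1 - lam) * stage_payoff phi sX sy g +
  lam * \sum_a \sum_b sX g a * sy g b * cont_value sy (rcons g (a, b)).
Proof.
have := @disc_from_cont_value sy g; rewrite -(cvg_shiftS (disc_from sy g)) /=.
under eq_fun do rewrite disc_fromS.
move/(cvg_unique (@Rhausdorff R)); apply; apply: cvgD; first exact: cvg_cst.
apply: cvgM; first exact: cvg_cst.
apply: cvg_fsum => a; apply: cvg_fsum => b.
by apply: cvgM; [exact: cvg_cst | exact: disc_from_cont_value].
Qed.

Lemma norm_cont_value_le sy g : `|cont_value sy g| <= payoff_bound.
Proof.
have bound N : - payoff_bound <= disc_from sy g N <= payoff_bound.
  by rewrite -ler_norml norm_disc_from_le.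
rewrite ler_norml; apply/andP; split.
- by apply: limr_ge (@disc_from_cvg sy g) _; apply: nearW => N; case/andP: (bound N).
- by apply: limr_le (@disc_from_cvg sy g) _; apply: nearW => N; case/andP: (bound N).
Qed.

Lemma cont_value_ext sy sy' g : (forall k, sy (g ++ k) = sy' (g ++ k)) ->
  cont_value sy g = cont_value sy' g.
Proof.
move=> sy_ext; rewrite /cont_value (_ : disc_from sy g = disc_from sy' g) //; apply: funext => N.
rewrite /disc_from; congr (_ * _); apply: eq_bigr => t _; congr (_ * _).
by apply: expect_from_ext => // k; rewrite /stage_payoff sy_ext.
Qed.

Hypothesis sX_autocratic : autocratic phi lam sX.

Lemma cont_value_nil sy : cont_value sy [::] = 0.
Proof. exact: cvg_lim (sX_autocratic sy). Qed.

Lemma first_action_neutral_lam0 : lam = 0 -> forall y, mixed_payoff phi (sX [::]) y = 0.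
Proof.
move=> lam0 y; have := cont_value_rec (fun=> dirac_dist R y) [::].
by rewrite cont_value_nil lam0 mul0r addr0 subr0 mul1r stage_payoffE sum_dirac_dist.
Qed.

Hypothesis lam_gt0 : 0 < lam.

Lemma cont_value_diff h sya syb : (forall k, ~~ prefix h k -> sya k = syb k) ->
  forall r g, h = g ++ r -> cont_value sya g - cont_value syb g =
    prob_from sX sya g r * lam ^+ size r * (cont_value sya h - cont_value syb h).
Proof.
move=> sy_off; elim=> [|[a b] r IH] g h_eq; first by rewrite h_eq cats0 /= !mul1r.
have g_off : ~~ prefix h g.
  by apply: not_prefix_shorter; rewrite h_eq size_cat /= addnS ltnS leq_addr.
rewrite (@cont_value_rec sya g) (@cont_value_rec syb g) /stage_payoff (sy_off g g_off).
rewrite opprD addrACA subrr add0r -mulrBr.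
rewrite !pair_big /= -sumrB (bigD1 (a, b)) //= big1 ?addr0 => [|[a' b'] ab'_neq].
  rewrite -mulrBr (IH (rcons g (a, b))) ?cat_rcons //=.
  by rewrite (sy_off g g_off) exprS; ring.
rewrite -mulrBr (@cont_value_ext sya syb) ?subrr ?mulr0 // => k.
apply: sy_off; rewrite h_eq cat_rcons prefix_catr // prefix_cons.
by rewrite eqxx /= eq_sym (negbTE ab'_neq).
Qed.

Definition reachable h := exists sy, prob_from sX sy [::] h != 0.

Lemma prob_from_off_subtree h sy sy' : (forall k, ~~ prefix h k -> sy k = sy' k) ->
  prob_from sX sy [::] h = prob_from sX sy' [::] h.
Proof.
move=> sy_off; apply: prob_from_agree => i lt_i; apply: sy_off.
by apply: not_prefix_shorter; rewrite size_take lt_i.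
Qed.

Lemma cont_value_indep h sy sy' : reachable h -> cont_value sy h = cont_value sy' h.
Proof.
case=> sy0 h_prob.
pose follow sy1 : stratY R SX SY := fun k => if prefix h k then sy1 k else sy0 k.
have follow_off sy1 sy2 k : ~~ prefix h k -> follow sy1 k = follow sy2 k.
  by move/negbTE => h_k; rewrite /follow h_k.
have follow_on sy1 k : follow sy1 (h ++ k) = sy1 (h ++ k) by rewrite /follow prefix_prefix.
have := cont_value_diff (follow_off sy sy') (r := h) (g := [::]) erefl.
rewrite !cont_value_nil subrr (@prob_from_off_subtree h _ sy0) => [/esym/eqP|k h_k]; last first.
  by rewrite /follow (negbTE h_k).
rewrite !mulf_eq0 (negbTE h_prob) expf_eq0 (gt_eqF lam_gt0) andbF /= subr_eq0.
by rewrite (cont_value_ext (follow_on sy)) (cont_value_ext (follow_on sy')) => /eqP.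
Qed.

Lemma reachable_rcons h a y : reachable h -> sX h a != 0 -> reachable (rcons h (a, y)).
Proof.
case=> sy0 h_prob sX_a; exists (fun k => if k == h then dirac_dist R y else sy0 k).
rewrite prob_from_rcons /= eqxx dirac_distE eqxx mulr1 mulf_neq0 //.
rewrite (@prob_from_off_subtree h _ sy0) // => k h_k.
by case: eqP h_k => // ->; rewrite prefix_refl.
Qed.

Variable y0 : SY.

(* By [cont_value_indep], the strategy of Y used here is irrelevant on reachable histories. *)
Definition value h := cont_value (fun=> dirac_dist R y0) h.

Lemma reachable_nil : reachable [::].
Proof. by exists (fun=> dirac_dist R y0); rewrite oner_neq0. Qed.

Lemma value_nil : value [::] = 0.
Proof. exact: cont_value_nil. Qed.

Lemma value_bellman h y : reachable h ->
  value h = (1 - lam) * mixed_payoff phi (sX h) y + lam * \sum_a sX h a * value (rcons h (a, y)).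
Proof.
move=> h_reach; pose sy k := if k == h then dirac_dist R y else dirac_dist R y0.
rewrite /value (@cont_value_indep h _ sy h_reach) cont_value_rec stage_payoffE /sy eqxx.
rewrite sum_dirac_dist; congr (_ + lam * _); apply: eq_bigr => a _.
under eq_bigr do rewrite [sX h a * _]mulrC -mulrA.
rewrite sum_dirac_dist; have [->|sX_a] := eqVneq (sX h a) 0; first by rewrite !mul0r.
by rewrite (@cont_value_indep _ sy (fun=> dirac_dist R y0) (reachable_rcons y h_reach sX_a)).
Qed.

Lemma value_bounded : has_sup (value @` reachable) /\ has_inf (value @` reachable).
Proof.
have value0 : (value @` reachable) 0 by exists [::]; [exact: reachable_nil | exact: value_nil].
have value_in h : - payoff_bound <= value h <= payoff_bound.
  by rewrite -ler_norml norm_cont_value_le.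
split; split; try by exists 0.
- by exists payoff_bound => _ [h _ <-]; case/andP: (value_in h).
- by exists (- payoff_bound) => _ [h _ <-]; case/andP: (value_in h).
Qed.

Definition value_sup := sup (value @` reachable).
Definition value_inf := inf (value @` reachable).

Lemma value_le_sup h : reachable h -> value h <= value_sup.
Proof. by move=> h_reach; apply: sup_upper_bound (proj1 value_bounded) _ _; exists h. Qed.

Lemma inf_le_value h : reachable h -> value_inf <= value h.
Proof. by move=> h_reach; apply: ge_inf; [exact: (proj2 (proj2 value_bounded)) | exists h]. Qed.

Lemma value_inf_le0 : value_inf <= 0.
Proof. by rewrite -value_nil inf_le_value //; exact: reachable_nil. Qed.

Lemma value_sup_ge0 : 0 <= value_sup.
Proof. by rewrite -value_nil value_le_sup //; exact: reachable_nil. Qed.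

Lemma continuation_between h y : reachable h ->
  lam * value_inf <= value h - (1 - lam) * mixed_payoff phi (sX h) y <= lam * value_sup.
Proof.
move=> h_reach; rewrite (value_bellman y h_reach) addrC addKr.
rewrite !ler_pM2l //; apply: mean_between => a sX_a.
by rewrite inf_le_value ?value_le_sup //; exact: reachable_rcons.
Qed.

Lemma exists_action_at_level w :
  (forall e, 0 < e -> exists2 h, reachable h & `|value h - w| <= e) ->
  exists tau : dist R SX, forall y,
    lam * value_inf <= w - (1 - lam) * mixed_payoff phi tau y <= lam * value_sup.
Proof.
move=> w_approx.
have scaled (tau : dist R SX) y :
    \sum_a tau a * ((1 - lam) * phi a y) = (1 - lam) * mixed_payoff phi tau y.
  by rewrite /mixed_payoff mulr_sumr; apply: eq_bigr => a _; rewrite mulrCA.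
have [|tau tau_in] := @simplex_feasible_of_approx R SX SY (fun y a => (1 - lam) * phi a y)
    (fun=> w - lam * value_sup) (fun=> w - lam * value_inf).
  move=> e e_gt0; have [h h_reach h_w] := w_approx e e_gt0.
  exists (sX h) => y; rewrite scaled.
  have /andP[lo hi] := continuation_between y h_reach.
  by move: h_w; rewrite ler_norml => /andP[? ?]; apply/andP; split; lra.
by exists tau => y; move: (tau_in y); rewrite scaled => /andP[? ?]; apply/andP; split; lra.
Qed.

Lemma exists_top_action : exists tau : dist R SX, forall y,
  lam * value_inf <= value_sup - (1 - lam) * mixed_payoff phi tau y <= lam * value_sup.
Proof.
apply: exists_action_at_level => e e_gt0.
have [_ [h h_reach <-] close] := sup_adherent e_gt0 (proj1 value_bounded).
rewrite -/value_sup in close; exists h => //; have := value_le_sup h_reach.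
by rewrite ler_norml => ?; apply/andP; split; lra.
Qed.

Lemma exists_bottom_action : exists tau : dist R SX, forall y,
  lam * value_inf <= value_inf - (1 - lam) * mixed_payoff phi tau y <= lam * value_sup.
Proof.
apply: exists_action_at_level => e e_gt0.
have [_ [h h_reach <-] close] := inf_adherent e_gt0 (proj2 value_bounded).
rewrite -/value_inf in close; exists h => //; have := inf_le_value h_reach.
by rewrite ler_norml => ?; apply/andP; split; lra.
Qed.

Lemma exists_neutral_action : value_sup <= value_inf ->
  exists tau : dist R SX, forall y, mixed_payoff phi tau y = 0.
Proof.
move=> sup_le_inf; have [tau tau_bounds] := exists_top_action.
have sup0 : value_sup = 0.
  by apply/eqP; rewrite eq_le value_sup_ge0 (le_trans sup_le_inf) ?value_inf_le0.
have inf0 : value_inf = 0 by apply/eqP; rewrite eq_le value_inf_le0 -sup0 sup_le_inf.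
exists tau => y; have := tau_bounds y; rewrite sup0 inf0 mulr0 sub0r oppr_ge0 oppr_le0.
by rewrite -eq_le mulf_eq0 subr_eq0 (gt_eqF lam_lt1) => /eqP.
Qed.

End ContinuationValue.

Theorem theorem1 (R : realType) (SX SY : finType) (phi : SX -> SY -> R)
  (lambda : R) (hSX : (0 < #|SX|)%N) (hSY : (0 < #|SY|)%N)
  (hl0 : 0 <= lambda) (hl1 : lambda < 1)
  (sX : stratX R SX SY) (hauto : autocratic phi lambda sX) :
  exists (s0 : dist R SX) (ss : dist R SX -> SY -> dist R SX),
    two_point s0 ss /\ autocratic phi lambda (reactive_strategy s0 ss).
Proof.
have /card_gt0P[y0 _] := hSY.
have const_strategy (tau : dist R SX) : (forall y, mixed_payoff phi tau y = 0) ->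
    exists s0 ss, two_point s0 ss /\ autocratic phi lambda (reactive_strategy s0 ss).
  move=> tau_neutral; exists tau, (fun _ _ => tau); split.
  - exact: const_strategy_two_point.
  - by apply: const_strategy_autocratic; rewrite ?hl0.
have [lam0|lam_neq0] := eqVneq lambda 0.
  by apply: const_strategy; exact: first_action_neutral_lam0 hauto lam0.
have lam_gt0 : 0 < lambda by rewrite lt_def lam_neq0.
pose m := value_inf phi lambda sX y0; pose M := value_sup phi lambda sX y0.
have [sup_le_inf|inf_lt_sup] := leP M m.
  have [tau tau_neutral] := exists_neutral_action hl0 hl1 hauto lam_gt0 sup_le_inf.
  exact: const_strategy tau_neutral.
have [tp tp_bounds] := exists_top_action hl0 hl1 hauto lam_gt0 y0.
have [tm tm_bounds] := exists_bottom_action hl0 hl1 hauto lam_gt0 y0.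
have [a0 tp_tm_a0] := two_point_ends_differ hl1 inf_lt_sup tp_bounds tm_bounds y0.
exists (two_point_init m M tp tm), (two_point_update phi lambda m M tp tm a0); split.
- exact: two_point_init_update.
- apply: (two_point_autocratic _ _ _ _ _ tp_bounds tm_bounds tp_tm_a0) => //.
  + exact: value_inf_le0.
  + exact: value_sup_ge0.
Qed.
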